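(* There exists an instance of the influential bandit problem (with $K=2$, $A$ symmetric positive semi-definite with $\max_{ij}|A_{ij}|\le 2$, and zero noise) on which the standard LCB algorithm incurs regret $\Omega\!\left(T^2/\log^2 T\right)$ as $T\to\infty$.
   Context: Influential bandit problem: there are $K$ arms, an unknown symmetric positive semi-definite interaction matrix $A\in\mathbb{R}^{K\times K}$ and an unknown initial loss vector $l^{(1)}\in\mathbb{R}^K$. At each round $t=1,\dots,T$ the algorithm chooses $i^{(t)}\in[K]$ based on past observations, observes $L^{(t)}=l^{(t)}_{i^{(t)}}+\xi^{(t)}$ where $\xi^{(t)}$ is zero-mean noise, and then $l^{(t+1)}_j=l^{(t)}_j+A_{i^{(t)}j}$ for all $j\in[K]$. The regret of the sequence of choices is $\sum_{t=1}^T l^{(t)}_{i^{(t)}}-\min_{(j_1,\dots,j_T)\in[K]^T}\sum_{t=1}^T l^{(t)}_{j_t}$, where in the minimum the losses evolve under the same dynamics driven by $j_1,\dots,j_T$. The standard LCB algorithm chooses $i^{(t)}=\arg\min_{i\in[K]}\big(\hat\mu_i-\sqrt{2\log t/n_i}\big)$, where $n_i$ is the number of times arm $i$ has been chosen before round $t$ and $\hat\mu_i$ is the empirical mean of its observed losses; ties are broken in favor of the smallest index, and an arm with $n_i=0$ is given score $-\infty$. (The witnessing instance in the paper is $K=2$, $A=\begin{pmatrix}1&1\\1&2\end{pmatrix}$, $l^{(1)}=(1,1)$, $\xi^{(t)}=0$.) *)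

From Stdlib Require Import Reals Lra List Arith.
Import ListNotations.
Open Scope R_scope.

(* Arms are the naturals 0, ..., K-1.  Rounds are numbered 1, 2, 3, ... *)

Fixpoint sumR (n : nat) (f : nat -> R) : R :=
  match n with
  | O => 0
  | S m => sumR m f + f m
  end.

Definition symmetric_mx (K : nat) (A : nat -> nat -> R) : Prop :=
  forall i j, (i < K)%nat -> (j < K)%nat -> A i j = A j i.

Definition psd_mx (K : nat) (A : nat -> nat -> R) : Prop :=
  forall x : nat -> R, 0 <= sumR K (fun i => sumR K (fun j => x i * A i j * x j)).

(* Loss vector at round t (t >= 1) when the arm chosen at round s is ch s:
   l^(t)_j = l^(1)_j + sum_{s=1}^{t-1} A_{ch s, j}. *)
Fixpoint cumA (A : nat -> nat -> R) (ch : nat -> nat) (n j : nat) : R :=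
  match n with
  | O => 0
  | S m => cumA A ch m j + A (ch (S m)) j
  end.

Definition loss (A : nat -> nat -> R) (l1 : nat -> R) (ch : nat -> nat)
  (t j : nat) : R := l1 j + cumA A ch (t - 1) j.

Fixpoint cost (A : nat -> nat -> R) (l1 : nat -> R) (ch : nat -> nat)
  (T : nat) : R :=
  match T with
  | O => 0
  | S m => cost A l1 ch m + loss A l1 ch (S m) (ch (S m))
  end.

(* A history is the list of (arm chosen, observed loss) for rounds 1..t-1. *)
Definition ch_of (h : list (nat * R)) (s : nat) : nat :=
  nth (s - 1) (map fst h) 0%nat.

Definition n_pulls (h : list (nat * R)) (i : nat) : nat :=
  length (filter (fun p => Nat.eqb (fst p) i) h).

Definition sum_obs (h : list (nat * R)) (i : nat) : R :=
  fold_right Rplus 0 (map snd (filter (fun p => Nat.eqb (fst p) i) h)).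

(* LCB score at round t; None stands for -infinity (arm never pulled). *)
Definition lcb_score (t : nat) (h : list (nat * R)) (i : nat) : option R :=
  match n_pulls h i with
  | O => None
  | n => Some (sum_obs h i / INR n - sqrt (2 * ln (INR t) / INR n))
  end.

Definition score_lt (a b : option R) : bool :=
  match a, b with
  | None, Some _ => true
  | Some x, Some y => if Rlt_dec x y then true else false
  | _, _ => false
  end.

(* argmin of f over 0..n-1, ties broken in favour of the smallest index *)
Fixpoint argmin_upto (f : nat -> option R) (n : nat) : nat :=
  match n with
  | O => O
  | S m =>
      match m with
      | O => O
      | _ => let b := argmin_upto f m in
             if score_lt (f m) (f b) then m else b
      end
  end.

Definition lcb_choice (K t : nat) (h : list (nat * R)) : nat :=
  argmin_upto (lcb_score t h) K.

(* History of LCB after t rounds, with noise realisation xi (xi r = noise at round r). *)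
Fixpoint lcb_hist (K : nat) (A : nat -> nat -> R) (l1 : nat -> R)
  (xi : nat -> R) (t : nat) : list (nat * R) :=
  match t with
  | O => []
  | S t' =>
      let h := lcb_hist K A l1 xi t' in
      let i := lcb_choice K (S t') h in
      h ++ [(i, loss A l1 (ch_of h) (S t') i + xi (S t'))]
  end.

Definition lcb_arm (K : nat) (A : nat -> nat -> R) (l1 : nat -> R)
  (xi : nat -> R) (s : nat) : nat :=
  lcb_choice K s (lcb_hist K A l1 xi (s - 1)).

Fixpoint all_seqs (K T : nat) : list (list nat) :=
  match T with
  | O => [[]]
  | S m => flat_map (fun i => map (cons i) (all_seqs K m)) (seq 0 K)
  end.

Fixpoint minl (l : list R) : R :=
  match l with
  | [] => 0
  | [x] => x
  | x :: r => Rmin x (minl r)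
  end.

Definition seq_fun (js : list nat) (s : nat) : nat := nth (s - 1) js 0%nat.

Definition opt_cost (K : nat) (A : nat -> nat -> R) (l1 : nat -> R) (T : nat) : R :=
  minl (map (fun js => cost A l1 (seq_fun js) T) (all_seqs K T)).

Definition lcb_regret (K : nat) (A : nat -> nat -> R) (l1 : nat -> R)
  (xi : nat -> R) (T : nat) : R :=
  cost A l1 (lcb_arm K A l1 xi) T - opt_cost K A l1 T.

(* On the instance A = [[1,1],[1,2]], l^(1) = (1,1), arm 0 has loss t at round t and arm 1 has
   loss t + n, where n counts the earlier pulls of arm 1; so a sequence pulling arm 1 n times
   costs n(n-1)/2 more than always playing arm 0, and it suffices that LCB pulls arm 1
   Omega(T / log T) times.  Along the LCB trajectory the empirical mean of arm 1 stays above
   roughly t/2: while arm 1 has been pulled no more often than arm 0 its confidence bonus is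
   the larger one, so LCB prefers arm 0 only if arm 0 has the smaller mean, and the sum of all
   observed losses is known exactly.  Hence each pull of arm 1 adds about t <= 2 * mean to its
   observed loss, which keeps that loss below n (n+1) (1 + 2 ln (n+1)); comparing with the
   lower bound n t / 2 gives t <= 2 (n+1) (1 + 2 ln (n+1)) + 2. *)

From Stdlib Require Import Reals Lra Lia List Arith.
Import ListNotations.
Open Scope R_scope.

Lemma ln_le (x y : R) : 0 < x -> x <= y -> ln x <= ln y.
Proof.
  intros Hx [Hxy | ->]; [left; now apply ln_increasing | apply Rle_refl].
Qed.

Lemma ln_nonneg (x : R) : 1 <= x -> 0 <= ln x.
Proof. intros. rewrite <- ln_1. apply ln_le; lra. Qed.

Lemma ln_le_sub_1 (u : R) : 0 < u -> ln u <= u - 1.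
Proof. intros Hu. pose proof (exp_ineq1_le (ln u)) as E. rewrite exp_ln in E; lra. Qed.

Lemma ln_succ_ge (x : R) : 0 < x -> ln x + 1 / (x + 1) <= ln (x + 1).
Proof.
  intros Hx.
  assert (Hq : 0 < x / (x + 1)) by (apply Rdiv_lt_0_compat; lra).
  assert (Hsplit : ln x = ln (x + 1) + ln (x / (x + 1))).
  { rewrite <- ln_mult by lra. f_equal. field. lra. }
  pose proof (ln_le_sub_1 _ Hq) as Hle.
  replace (x / (x + 1) - 1) with (- (1 / (x + 1))) in Hle by (field; lra).
  lra.
Qed.

Lemma ln_bounds_large (x : R) : 10000 <= x -> 1 <= ln x <= x / 50.
Proof.
  intros Hx; split.
  - rewrite <- (ln_exp 1). apply ln_le; [apply exp_pos|].
    pose proof exp_le_3; lra.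
  - pose proof (sqrt_sqrt x ltac:(lra)) as Es.
    assert (Hsq : 100 <= sqrt x).
    { rewrite <- (sqrt_square 100) by lra. apply sqrt_le_1_alt; lra. }
    assert (Hln : ln x = 2 * ln (sqrt x)) by (rewrite <- Es at 1; rewrite ln_mult; lra).
    pose proof (ln_le_sub_1 (sqrt x) ltac:(lra)); nra.
Qed.

Lemma minl_le_In (l : list R) (x : R) : In x l -> minl l <= x.
Proof.
  induction l as [|a r IH]; [intros []|].
  intros [<- | Hx]; destruct r as [|b r].
  - apply Rle_refl.
  - apply Rmin_l.
  - destruct Hx.
  - eapply Rle_trans; [apply Rmin_r | exact (IH Hx)].
Qed.

Lemma repeat_In_all_seqs (K T i : nat) : (i < K)%nat -> In (repeat i T) (all_seqs K T).
Proof.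
  intros Hi; induction T as [|T IH]; simpl; [now left|].
  apply in_flat_map; exists i; split.
  - apply in_seq; lia.
  - now apply in_map.
Qed.

Lemma n_pulls_snoc (h : list (nat * R)) (a : nat) (o : R) (i : nat) :
  n_pulls (h ++ [(a, o)]) i = (n_pulls h i + if a =? i then 1 else 0)%nat.
Proof.
  unfold n_pulls; rewrite filter_app, length_app; simpl.
  destruct (a =? i); reflexivity.
Qed.

Lemma sum_obs_snoc (h : list (nat * R)) (a : nat) (o : R) (i : nat) :
  sum_obs (h ++ [(a, o)]) i = sum_obs h i + if a =? i then o else 0.
Proof.
  unfold sum_obs; rewrite filter_app, map_app, fold_right_app; simpl.
  destruct (a =? i); simpl; [|lra].
  induction (map snd _) as [|x l IH]; simpl; lra.
Qed.

Lemma cumA_ext (A : nat -> nat -> R) (ch ch' : nat -> nat) (n j : nat) :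
  (forall s, (1 <= s <= n)%nat -> ch s = ch' s) -> cumA A ch n j = cumA A ch' n j.
Proof.
  induction n as [|n IH]; intros E; simpl; [reflexivity|].
  rewrite IH, E by (intros; try apply E; lia); reflexivity.
Qed.

Section LcbHistory.

Variables (K : nat) (A : nat -> nat -> R) (l1 xi : nat -> R).

Lemma lcb_hist_length (t : nat) : length (lcb_hist K A l1 xi t) = t.
Proof.
  induction t as [|t IH]; [reflexivity|].
  simpl; rewrite length_app, IH; simpl; lia.
Qed.

Lemma ch_of_lcb_hist (t s : nat) :
  (1 <= s <= t)%nat -> ch_of (lcb_hist K A l1 xi t) s = lcb_arm K A l1 xi s.
Proof.
  induction t as [|t IH]; intros Hs; [lia|].
  unfold ch_of in *; simpl lcb_hist; rewrite map_app.
  destruct (Nat.eq_dec s (S t)) as [->|Hne].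
  - rewrite app_nth2; rewrite length_map, lcb_hist_length; [|lia].
    replace (S t - 1 - t)%nat with 0%nat by lia.
    unfold lcb_arm; simpl; rewrite Nat.sub_0_r; reflexivity.
  - rewrite app_nth1 by (rewrite length_map, lcb_hist_length; lia).
    apply IH; lia.
Qed.

Lemma lcb_hist_snoc (t : nat) :
  lcb_hist K A l1 xi (S t) =
  lcb_hist K A l1 xi t ++
  [(lcb_arm K A l1 xi (S t),
    loss A l1 (lcb_arm K A l1 xi) (S t) (lcb_arm K A l1 xi (S t)) + xi (S t))].
Proof.
  assert (Hloss : forall j, loss A l1 (ch_of (lcb_hist K A l1 xi t)) (S t) j
                          = loss A l1 (lcb_arm K A l1 xi) (S t) j).
  { intros j; unfold loss; apply f_equal, cumA_ext.
    intros; apply ch_of_lcb_hist; lia. }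
  rewrite <- Hloss; unfold lcb_arm; simpl; rewrite Nat.sub_0_r; reflexivity.
Qed.

End LcbHistory.

Lemma lcb_choice_two (t : nat) (h : list (nat * R)) :
  lcb_choice 2 t h =
  if score_lt (lcb_score t h 1) (lcb_score t h 0) then 1%nat else 0%nat.
Proof. reflexivity. Qed.

Lemma lcb_score_pulled (t : nat) (h : list (nat * R)) (i : nat) :
  (1 <= n_pulls h i)%nat ->
  lcb_score t h i =
  Some (sum_obs h i / INR (n_pulls h i) - sqrt (2 * ln (INR t) / INR (n_pulls h i))).
Proof. intros. unfold lcb_score. destruct (n_pulls h i); [lia|reflexivity]. Qed.

(* With fewer pulls, arm 1 has the larger bonus, so preferring arm 0 forces the smaller mean. *)
Lemma lcb_choice_two_mean_le (t : nat) (h : list (nat * R)) :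
  (1 <= t)%nat -> lcb_choice 2 t h = 0%nat ->
  (1 <= n_pulls h 1)%nat -> (n_pulls h 1 <= n_pulls h 0)%nat ->
  sum_obs h 0 * INR (n_pulls h 1) <= sum_obs h 1 * INR (n_pulls h 0).
Proof.
  intros Ht Hch Hn Hnm.
  rewrite lcb_choice_two, !lcb_score_pulled in Hch by lia.
  cbn [score_lt] in Hch; destruct Rlt_dec as [_|Hge]; [discriminate|].
  set (n := INR (n_pulls h 1)) in *; set (m := INR (n_pulls h 0)) in *.
  assert (Hn1 : 1 <= n) by (apply (le_INR 1); lia).
  assert (Hnm' : n <= m) by (apply le_INR; lia).
  assert (Hbonus : sqrt (2 * ln (INR t) / m) <= sqrt (2 * ln (INR t) / n)).
  { apply sqrt_le_1_alt, Rmult_le_compat_l, Rinv_le_contravar; try lra.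
    pose proof (ln_nonneg (INR t) ltac:(apply (le_INR 1); lia)); lra. }
  assert (Hmean : sum_obs h 0 / m <= sum_obs h 1 / n) by lra.
  apply (Rmult_le_compat_r (n * m)) in Hmean; [|nra].
  replace (sum_obs h 0 / m * (n * m)) with (sum_obs h 0 * n) in Hmean by (field; lra).
  replace (sum_obs h 1 / n * (n * m)) with (sum_obs h 1 * m) in Hmean by (field; lra).
  exact Hmean.
Qed.

Definition infl_mx (i j : nat) : R := if ((i =? 1) && (j =? 1))%bool then 2 else 1.
Definition init_loss (_ : nat) : R := 1.

Fixpoint pulls1 (ch : nat -> nat) (n : nat) : R :=
  match n with
  | O => 0
  | S m => pulls1 ch m + if ch (S m) =? 1 then 1 else 0
  end.

Lemma pulls1_ext (ch ch' : nat -> nat) (n : nat) :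
  (forall s, (1 <= s <= n)%nat -> ch s = ch' s) -> pulls1 ch n = pulls1 ch' n.
Proof.
  induction n as [|n IH]; intros E; simpl; [reflexivity|].
  rewrite IH, E by (intros; try apply E; lia); reflexivity.
Qed.

Lemma cumA_infl (ch : nat -> nat) (n j : nat) :
  cumA infl_mx ch n j = INR n + if j =? 1 then pulls1 ch n else 0.
Proof.
  induction n as [|n IH]; simpl cumA; simpl pulls1.
  - destruct (j =? 1); simpl; lra.
  - rewrite IH, S_INR; unfold infl_mx.
    destruct (j =? 1), (ch (S n) =? 1); simpl; lra.
Qed.

Lemma loss_infl (ch : nat -> nat) (t j : nat) : (1 <= t)%nat ->
  loss infl_mx init_loss ch t j = INR t + if j =? 1 then pulls1 ch (t - 1) else 0.
Proof.
  intros Ht; unfold loss, init_loss; rewrite cumA_infl.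
  destruct t as [|t]; [lia|]; rewrite Nat.sub_succ, Nat.sub_0_r, S_INR; lra.
Qed.

Lemma cost_infl (ch : nat -> nat) (T : nat) :
  cost infl_mx init_loss ch T = INR T * (INR T + 1) / 2 + pulls1 ch T * (pulls1 ch T - 1) / 2.
Proof.
  induction T as [|T IH]; simpl cost; simpl pulls1; [simpl; lra|].
  rewrite IH, loss_infl, Nat.sub_succ, Nat.sub_0_r, S_INR by lia.
  destruct (ch (S T) =? 1); lra.
Qed.

Lemma opt_cost_infl_le (T : nat) :
  opt_cost 2 infl_mx init_loss T <= INR T * (INR T + 1) / 2.
Proof.
  eapply Rle_trans.
  - apply minl_le_In, in_map, (repeat_In_all_seqs 2 T 0); lia.
  - rewrite cost_infl.
    rewrite (pulls1_ext _ (fun _ => 0%nat)) by (intros; apply nth_repeat).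
    assert (Hzero : pulls1 (fun _ => 0%nat) T = 0)
      by (induction T as [|T IH]; simpl; lra).
    rewrite Hzero; lra.
Qed.

Definition hist (t : nat) : list (nat * R) := lcb_hist 2 infl_mx init_loss (fun _ => 0) t.
Definition arm (s : nat) : nat := lcb_arm 2 infl_mx init_loss (fun _ => 0) s.

Lemma arm_0_or_1 (s : nat) : arm s = 0%nat \/ arm s = 1%nat.
Proof. unfold arm, lcb_arm; rewrite lcb_choice_two; destruct score_lt; auto. Qed.

Lemma pulls1_arm (t : nat) : pulls1 arm t = INR (n_pulls (hist t) 1).
Proof.
  induction t as [|t IH]; [reflexivity|].
  unfold hist; rewrite lcb_hist_snoc, n_pulls_snoc, plus_INR; fold (hist t).
  change (lcb_arm 2 infl_mx init_loss (fun _ => 0)) with arm.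
  simpl pulls1; rewrite IH; destruct (arm (S t) =? 1); simpl; lra.
Qed.

Lemma hist_snoc (t : nat) :
  hist (S t) = hist t ++
    [(arm (S t), INR (S t) + if arm (S t) =? 1 then INR (n_pulls (hist t) 1) else 0)].
Proof.
  unfold hist at 1; rewrite lcb_hist_snoc; fold (hist t).
  change (lcb_arm 2 infl_mx init_loss (fun _ => 0)) with arm.
  rewrite loss_infl, Nat.sub_succ, Nat.sub_0_r, pulls1_arm, Rplus_0_r by lia.
  reflexivity.
Qed.

Lemma n_pulls_hist_total (t : nat) : (n_pulls (hist t) 0 + n_pulls (hist t) 1 = t)%nat.
Proof.
  induction t as [|t IH]; [reflexivity|].
  rewrite hist_snoc, !n_pulls_snoc.
  destruct (arm_0_or_1 (S t)) as [-> | ->]; simpl; lia.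
Qed.

Lemma lcb_regret_infl_ge (T : nat) :
  lcb_regret 2 infl_mx init_loss (fun _ => 0) T >=
  INR (n_pulls (hist T) 1) * (INR (n_pulls (hist T) 1) - 1) / 2.
Proof.
  unfold lcb_regret; pose proof (opt_cost_infl_le T).
  rewrite cost_infl; change (lcb_arm 2 infl_mx init_loss (fun _ => 0)) with arm.
  rewrite pulls1_arm; lra.
Qed.

Lemma log_envelope_step (n s t : R) :
  1 <= n -> s <= n * (n + 1) * (1 + 2 * ln (n + 1)) -> n * t <= 2 * s + 2 * n ->
  s + (t + 1 + n) <= (n + 1) * (n + 1 + 1) * (1 + 2 * ln (n + 1 + 1)).
Proof.
  intros Hn Hs Ht.
  set (V := 1 + 2 * ln (n + 1)) in *.
  assert (HV : V * (n + 2) + 2 <= (1 + 2 * ln (n + 1 + 1)) * (n + 2)).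
  { pose proof (ln_succ_ge (n + 1) ltac:(lra)) as Hl.
    assert (E : 1 / (n + 1 + 1) * (n + 2) = 1) by (field; lra).
    unfold V; nra. }
  apply (Rmult_le_reg_l n); [lra|].
  assert (Hs' : (n + 2) * s <= (n + 2) * (n * (n + 1) * V))
    by (apply Rmult_le_compat_l; lra).
  assert (HV' : n * ((n + 1) * (V * (n + 2) + 2))
                <= n * ((n + 1) * ((1 + 2 * ln (n + 1 + 1)) * (n + 2))))
    by (apply Rmult_le_compat_l; [lra|]; apply Rmult_le_compat_l; lra).
  nra.
Qed.

(* Inverting T <= 2 (n+1)(1 + 2 ln (n+1)) + 2 gives n >= T / (12 ln T) + 1. *)
Lemma quadratic_over_log_sq (T n : R) :
  10000 <= T -> 1 <= n -> n + 1 <= T ->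
  T <= 2 * (n + 1) * (1 + 2 * ln (n + 1)) + 2 ->
  1 / 288 * (T ^ 2 / ln T ^ 2) <= n * (n - 1) / 2.
Proof.
  intros HT Hn HnT Hround.
  destruct (ln_bounds_large T HT) as [L1 L2].
  assert (Hln : 0 <= ln (n + 1) <= ln T) by (split; [apply ln_nonneg | apply ln_le]; lra).
  assert (Hround' : T - 2 <= (n + 1) * (6 * ln T)).
  { assert (1 + 2 * ln (n + 1) <= 3 * ln T) by lra.
    assert (2 * (n + 1) * (1 + 2 * ln (n + 1)) <= 2 * (n + 1) * (3 * ln T))
      by (apply Rmult_le_compat_l; lra).
    lra. }
  set (x := T / ln T).
  assert (Ex : T = x * ln T) by (unfold x; field; lra).
  assert (Hx50 : 50 <= x).
  { apply (Rmult_le_reg_r (ln T)); [lra|]. rewrite <- Ex; lra. }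
  assert (Hx : x - 2 <= 6 * (n + 1)).
  { apply (Rmult_le_reg_r (ln T)); [lra|]. rewrite Ex in Hround'; nra. }
  assert (Ex2 : T ^ 2 / ln T ^ 2 = x * x) by (unfold x; field; lra).
  rewrite Ex2; nra.
Qed.

(* State after round m + n in which arm 0 was pulled m times with observed losses
   summing to S0, and arm 1 n times with observed losses summing to S1. *)
Record good_state (m n : nat) (S0 S1 : R) : Prop := {
  gs_pulled0 : (1 <= m)%nat;
  gs_pulled1 : (1 <= n)%nat;
  gs_total : S0 + S1 = (INR m + INR n) * (INR m + INR n + 1) / 2 + INR n * (INR n - 1) / 2;
  gs_sq_le : INR n * INR n <= S1;
  gs_mean_ge : INR n * (INR m + INR n) <= 2 * S1 + 2 * INR n;
  gs_envelope : S1 <= INR n * (INR n + 1) * (1 + 2 * ln (INR n + 1))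
}.

Lemma good_state_pull0 (m n : nat) (S0 S1 o : R) :
  good_state m n S0 S1 -> o = INR m + INR n + 1 ->
  ((n <= m)%nat -> S0 * INR n <= S1 * INR m) ->
  good_state (S m) n (S0 + o) S1.
Proof.
  intros [Hm Hn Htot Hsq Hmean Henv] -> Hcmp.
  assert (Hn1 : 1 <= INR n) by (apply (le_INR 1); lia).
  constructor; rewrite ?S_INR; auto; try lra.
  destruct (Nat.le_gt_cases n m) as [Hle | Hlt].
  - specialize (Hcmp Hle).
    set (t := INR m + INR n).
    assert (Ht : 0 < t) by (unfold t; pose proof (pos_INR m); lra).
    assert (HS0 : S0 = t * (t + 1) / 2 + INR n * (INR n - 1) / 2 - S1) by (unfold t; lra).
    assert (Hmeant : (t + 1) / 2 * INR n * t <= S1 * t)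
      by (rewrite HS0 in Hcmp; unfold t in *; nra).
    assert (Hmean' : (t + 1) / 2 * INR n <= S1) by (apply (Rmult_le_reg_r t); lra).
    unfold t in *; lra.
  - assert (INR m + 1 <= INR n) by (rewrite <- S_INR; apply le_INR; lia).
    nra.
Qed.

Lemma good_state_pull1 (m n : nat) (S0 S1 o : R) :
  good_state m n S0 S1 -> o = INR m + INR n + 1 + INR n ->
  good_state m (S n) S0 (S1 + o).
Proof.
  intros [Hm Hn Htot Hsq Hmean Henv] ->.
  assert (Hn1 : 1 <= INR n) by (apply (le_INR 1); lia).
  assert (Hm1 : 1 <= INR m) by (apply (le_INR 1); lia).
  constructor; rewrite ?S_INR; auto; try lra; try nra.
  replace (S1 + (INR m + INR n + 1 + INR n))
    with (S1 + ((INR m + INR n) + 1 + INR n)) by ring.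
  apply log_envelope_step; assumption.
Qed.

Lemma good_state_round_le (m n : nat) (S0 S1 : R) :
  good_state m n S0 S1 ->
  INR m + INR n <= 2 * (INR n + 1) * (1 + 2 * ln (INR n + 1)) + 2.
Proof.
  intros [Hm Hn Htot Hsq Hmean Henv].
  assert (Hn1 : 1 <= INR n) by (apply (le_INR 1); lia).
  apply (Rmult_le_reg_l (INR n)); nra.
Qed.

Lemma hist_2 : hist 2 = [(0%nat, INR 1 + 0); (1%nat, INR 2 + INR 0)].
Proof.
  assert (Harm1 : arm 1 = 0%nat) by reflexivity.
  assert (Harm2 : arm 2 = 1%nat) by reflexivity.
  rewrite !hist_snoc, Harm1, Harm2, n_pulls_snoc; reflexivity.
Qed.

Lemma lcb_good_state (t : nat) : (2 <= t)%nat ->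
  good_state (n_pulls (hist t) 0) (n_pulls (hist t) 1) (sum_obs (hist t) 0) (sum_obs (hist t) 1).
Proof.
  induction t as [|t IH]; intros Ht; [lia|].
  destruct (Nat.eq_dec t 1) as [-> | Ht1].
  { rewrite hist_2; unfold n_pulls, sum_obs; simpl.
    pose proof (ln_nonneg (1 + 1) ltac:(lra)).
    constructor; simpl; lra || lia. }
  specialize (IH ltac:(lia)).
  pose proof (n_pulls_hist_total t) as Htot.
  assert (Hround : INR (S t) = INR (n_pulls (hist t) 0) + INR (n_pulls (hist t) 1) + 1)
    by (rewrite <- plus_INR, Htot, S_INR; reflexivity).
  rewrite hist_snoc, !n_pulls_snoc, !sum_obs_snoc, Hround.
  destruct (arm_0_or_1 (S t)) as [Harm | Harm]; rewrite Harm; cbn [Nat.eqb];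
    rewrite ?Nat.add_0_r, ?Rplus_0_r, Nat.add_1_r.
  - apply good_state_pull0; [exact IH | ring |].
    apply (lcb_choice_two_mean_le (S t)); [lia | | apply IH].
    unfold arm, lcb_arm in Harm; now rewrite Nat.sub_succ, Nat.sub_0_r in Harm.
  - apply good_state_pull1; [exact IH | ring].
Qed.

Theorem proposition2 :
  exists (A : nat -> nat -> R) (l1 : nat -> R),
    symmetric_mx 2 A /\ psd_mx 2 A /\
    (forall i j, (i < 2)%nat -> (j < 2)%nat -> Rabs (A i j) <= 2) /\
    exists (c : R) (T0 : nat), 0 < c /\
      forall T : nat, (T0 <= T)%nat ->
        lcb_regret 2 A l1 (fun _ => 0) T >= c * (INR T ^ 2 / ln (INR T) ^ 2).
Proof.
  exists infl_mx, init_loss; split; [|split; [|split]].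
  - intros [|[|i]] [|[|j]] Hi Hj; try lia; reflexivity.
  - intros x; unfold infl_mx; simpl; nra.
  - intros i j _ _; unfold infl_mx.
    destruct (_ && _)%bool; rewrite Rabs_pos_eq; lra.
  - exists (1 / 288), 10000%nat; split; [lra|].
    intros T HT.
    assert (HTr : 10000 <= INR T)
      by (apply le_INR in HT; rewrite INR_IZR_INZ in HT; exact HT).
    assert (HT2 : (2 <= T)%nat) by (apply INR_le; simpl; lra).
    pose proof (lcb_good_state T HT2) as Hgood.
    pose proof (good_state_round_le _ _ _ _ Hgood) as Hround.
    destruct Hgood as [Hm Hn _ _ _ _].
    rewrite <- plus_INR, n_pulls_hist_total in Hround.
    pose proof (lcb_regret_infl_ge T) as Hregret.
    assert (Hm1 : 1 <= INR (n_pulls (hist T) 0)) by (apply (le_INR 1); lia).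
    pose proof (n_pulls_hist_total T) as Htot; apply (f_equal INR) in Htot.
    rewrite plus_INR in Htot.
    pose proof (quadratic_over_log_sq (INR T) (INR (n_pulls (hist T) 1)) HTr
                  ltac:(apply (le_INR 1); lia) ltac:(lra) Hround).
    lra.
Qed.
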